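(* Let $n,p,r\ge 1$, let $A_0,A_1\in\mathbb{R}^{n\times n}$, $B\in\mathbb{R}^{n\times r}$, $C\in\mathbb{R}^{p\times n}$, and consider the second order linear discrete-time system $$x_{t+2}=A_0x_t+A_1x_{t+1}+Bu_t,\qquad x_0=a_0,\ x_1=a_1,\qquad y_t=Cx_t,\qquad t=0,1,2,\dots,$$ with states $x_t\in\mathbb{R}^n$, inputs $u_t\in\mathbb{R}^r$, outputs $y_t\in\mathbb{R}^p$ and unknown initial vectors $a_0,a_1\in\mathbb{R}^n$. Define matrices $S_k,P_k\in\mathbb{R}^{n\times n}$ by $S_0=A_0$, $P_0=A_1$ and, for $k\ge 1$, $S_k=P_{k-1}A_0$, $P_k=S_{k-1}+P_{k-1}A_1$. Let $\mathcal{O}(A_0,A_1,C)$ be the $(2np)\times(2n)$ block matrix whose block rows are, in order, $$\begin{bmatrix} C & 0_{p\times n}\end{bmatrix},\ \begin{bmatrix} 0_{p\times n} & C\end{bmatrix},\ \begin{bmatrix} CS_0 & CP_0\end{bmatrix},\ \begin{bmatrix} CS_1 & CP_1\end{bmatrix},\ \dots,\ \begin{bmatrix} CS_{2n-3} & CP_{2n-3}\end{bmatrix}.$$ Then the system is observable if and only if $\operatorname{rank}\mathcal{O}(A_0,A_1,C)=2n$.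
   Context: The system is called observable (at time $t=0$) if there exists some $t_1>0$ such that the initial state $(x_0,x_1)=(a_0,a_1)$ can be uniquely determined from the knowledge of $u_t$ and $y_t$ for $t=0,1,\dots,t_1$. Here $0_{\ell\times m}$ denotes the $\ell\times m$ zero matrix. *)

From HB Require Import structures.
From mathcomp Require Import all_boot all_order all_algebra.
From mathcomp Require Import reals.
Set Implicit Arguments. Unset Strict Implicit. Unset Printing Implicit Defensive.
Import Order.TTheory GRing.Theory Num.Theory.
Local Open Scope ring_scope.

Section SecondOrder.
Variables (R : realType) (n p r : nat).
Variables (A0 A1 : 'M[R]_n) (B : 'M[R]_(n, r)) (C : 'M[R]_(p, n)).

(* (x_t, x_{t+1}) for the system x_{t+2} = A0 x_t + A1 x_{t+1} + B u_t,
   x_0 = a0, x_1 = a1. *)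
Fixpoint state_pair (a0 a1 : 'cV[R]_n) (u : nat -> 'cV[R]_r) (t : nat)
  : 'cV[R]_n * 'cV[R]_n :=
  match t with
  | 0 => (a0, a1)
  | t'.+1 => let xs := state_pair a0 a1 u t' in
             (xs.2, A0 *m xs.1 + A1 *m xs.2 + B *m u t')
  end.

Definition state a0 a1 u t : 'cV[R]_n := (state_pair a0 a1 u t).1.

Definition output a0 a1 u t : 'cV[R]_p := C *m state a0 a1 u t.

Definition observable : Prop :=
  exists t1 : nat, (0 < t1)%N /\
    forall (u : nat -> 'cV[R]_r) (a0 a1 b0 b1 : 'cV[R]_n),
      (forall t, (t <= t1)%N -> output a0 a1 u t = output b0 b1 u t) ->
      a0 = b0 /\ a1 = b1.

Fixpoint SP (k : nat) : 'M[R]_n * 'M[R]_n :=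
  match k with
  | 0 => (A0, A1)
  | k'.+1 => let sp := SP k' in (sp.2 *m A0, sp.1 + sp.2 *m A1)
  end.

Definition Smx k := (SP k).1.
Definition Pmx k := (SP k).2.

Definition obs_block (k : nat) : 'M[R]_(p, n + n) :=
  match k with
  | 0 => row_mx C 0
  | 1 => row_mx 0 C
  | k'.+2 => row_mx (C *m Smx k') (C *m Pmx k')
  end.

Definition obs_mx : 'M[R]_(\sum_(k < (2 * n)%N) p, n + n) :=
  \mxcol_(k < (2 * n)%N) obs_block k.

End SecondOrder.

From HB Require Import structures.
From mathcomp Require Import all_boot all_order all_algebra.
From mathcomp Require Import reals zify.
Set Implicit Arguments. Unset Strict Implicit. Unset Printing Implicit Defensive.
Import Order.TTheory GRing.Theory Num.Theory.
Local Open Scope ring_scope.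

(* The stacked state (x_t, x_{t+1}) evolves by the block companion matrix
   M = [[0, 1], [A0, A1]], and the input cancels from the difference of two
   runs, so two initial states d apart yield outputs differing by
   [C 0] M^t d. Hence observability means that no d <> 0 is killed by every
   [C 0] M^t. By Cayley-Hamilton the powers M^t with t < 2n already span all
   of them, and [C 0] M^t is exactly block row t of O(A0, A1, C) (the S_k, P_k
   recursion is the top block row of M^(k+2)); so observability is the
   triviality of the kernel of O, i.e. rank O = 2n. *)

Lemma exp_mx_low_powers (F : fieldType) N (M : 'M[F]_N) k :
  exists c : 'I_N -> F, M ^+ k = \sum_(i < N) c i *: M ^+ i.
Proof.
case: N M => [|N] M; first by exists (fun=> 0); rewrite big_ord0 [LHS]flatmx0.
set P := char_poly M; set q := 'X^k %% P.
have q_small : (size q <= N.+1)%N.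
  by rewrite -ltnS -(size_char_poly M) ltn_modpN0 // monic_neq0 ?char_poly_monic.
have q_sum : q = \sum_(i < N.+1) q`_i *: 'X^i.
  rewrite -poly_def; apply/polyP => i; rewrite coef_poly.
  by case: ltnP => // /(leq_trans q_small)/(nth_default 0).
exists (fun i => q`_i).
rewrite -[M in LHS]horner_mx_X -rmorphXn (divp_eq 'X^k P) rmorphD rmorphM /=.
rewrite Cayley_Hamilton mulr0 add0r -/q {1}q_sum linear_sum.
by apply: eq_bigr => i _; rewrite linearZ rmorphXn /= horner_mx_X.
Qed.

Lemma mulmx_powers_eq0 (F : fieldType) N q (M : 'M[F]_N) (E : 'M_(q, N))
    (z : 'cV_N) :
  (forall k, (k < N)%N -> E *m M ^+ k *m z = 0) ->
  forall k, E *m M ^+ k *m z = 0.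
Proof.
move=> low k; have [c ->] := exp_mx_low_powers M k.
rewrite mulmx_sumr mulmx_suml big1 // => i _.
by rewrite -scalemxAr -scalemxAl low ?scaler0.
Qed.

Lemma full_col_rankP (F : fieldType) m k (A : 'M[F]_(m, k)) :
  \rank A = k <-> (forall z : 'cV_k, A *m z = 0 -> z = 0).
Proof.
rewrite -mxrank_tr; split => [/eqP A_free z Az0 | A_inj].
  apply: trmx_inj; apply/eqP; rewrite trmx0 -(mulmx_free_eq0 _ A_free).
  by rewrite -trmx_mul Az0 trmx0.
apply/eqP/inj_row_free => v /(congr1 trmx); rewrite trmx_mul trmxK trmx0.
by move/A_inj/(congr1 trmx); rewrite trmxK trmx0.
Qed.

Lemma mul_mxcol_eq0 (F : fieldType) m k (p_ : 'I_m -> nat)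
    (B_ : forall i, 'M[F]_(p_ i, k)) (z : 'cV_k) :
  (\mxcol_i B_ i) *m z = 0 <-> (forall i, B_ i *m z = 0).
Proof.
rewrite mxcol_mul; split => [Bz0 i | Bz0].
  by have := congr1 (fun X => submxcol X i) Bz0; rewrite /= mxcolK submxcol0.
by apply/mxcolP => i; rewrite mxcolK submxcol0.
Qed.

Section SecondOrderSystem.
Variables (R : realType) (n p r : nat).
Variables (A0 A1 : 'M[R]_n) (B : 'M[R]_(n, r)) (C : 'M[R]_(p, n)).

Definition companion_mx : 'M[R]_(n + n) := block_mx 0 1%:M A0 A1.

Lemma companion_exp_topE k :
  row_mx 1%:M 0 *m companion_mx ^+ k.+2 = row_mx (Smx A0 A1 k) (Pmx A0 A1 k).
Proof.
elim: k => [|k IHk]; rewrite exprSr -mulmxE mulmxA; last first.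
  by rewrite IHk /companion_mx mul_row_block !mulmx0 mulmx1 add0r.
rewrite expr1 /companion_mx !mul_row_block.
by rewrite !(mulmx0, mul0mx, mul1mx, addr0, add0r).
Qed.

Lemma obs_blockE k : obs_block A0 A1 C k = row_mx C 0 *m companion_mx ^+ k.
Proof.
case: k => [|[|k]].
- by rewrite expr0 mulmx1.
- by rewrite expr1 /companion_mx mul_row_block !mulmx0 !mul0mx mulmx1 !addr0.
have -> : row_mx C 0 = C *m row_mx 1%:M (0 : 'M_n).
  by rewrite mul_mx_row mulmx1 mulmx0.
by rewrite -mulmxA companion_exp_topE mul_mx_row.
Qed.

Lemma state_pair_sub u a0 a1 b0 b1 t :
  col_mx (state_pair A0 A1 B a0 a1 u t).1 (state_pair A0 A1 B a0 a1 u t).2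
  - col_mx (state_pair A0 A1 B b0 b1 u t).1 (state_pair A0 A1 B b0 b1 u t).2 =
  companion_mx ^+ t *m col_mx (a0 - b0) (a1 - b1).
Proof.
elim: t => [|t IHt] /=; first by rewrite mul1mx opp_col_mx add_col_mx.
rewrite exprS -mulmxE -mulmxA -IHt !opp_col_mx !add_col_mx.
rewrite /companion_mx mul_block_col mul0mx mul1mx add0r !mulmxBr; congr col_mx.
by rewrite opprD addrACA subrr addr0 opprD addrACA.
Qed.

Lemma output_sub u a0 a1 b0 b1 t :
  output A0 A1 B C a0 a1 u t - output A0 A1 B C b0 b1 u t =
  row_mx C 0 *m companion_mx ^+ t *m col_mx (a0 - b0) (a1 - b1).
Proof.
rewrite -mulmxA -(state_pair_sub u) opp_col_mx add_col_mx mul_row_col mul0mx.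
by rewrite addr0 mulmxBr.
Qed.

Lemma mul_obs_mx_eq0 (z : 'cV[R]_(n + n)) :
  obs_mx A0 A1 C *m z = 0 <->
  forall k, row_mx C 0 *m companion_mx ^+ k *m z = 0.
Proof.
rewrite mul_mxcol_eq0; split => [low | unobs i]; last by rewrite obs_blockE.
apply: mulmx_powers_eq0 => k lt_k.
have lt2_k : (k < 2 * n)%N by rewrite mul2n -addnn.
by have := low (Ordinal lt2_k); rewrite obs_blockE.
Qed.

Lemma observableP : (0 < n)%N ->
  observable A0 A1 B C <->
  forall z : 'cV_(n + n), obs_mx A0 A1 C *m z = 0 -> z = 0.
Proof.
move=> n_gt0; split => [[t1 [_ obs]] z /mul_obs_mx_eq0 unobs | ker0].
  have [z1_0 z2_0] : usubmx z = 0 /\ dsubmx z = 0.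
    apply: (obs (fun=> 0)) => t _; apply/eqP.
    by rewrite -subr_eq0 output_sub !subr0 vsubmxK unobs.
  by rewrite -[z]vsubmxK z1_0 z2_0 col_mx0.
exists (2 * n).-1; split => [|u a0 a1 b0 b1 same_out]; first by lia.
suff /eqP : col_mx (a0 - b0) (a1 - b1) = 0.
  by rewrite col_mx_eq0 !subr_eq0 => /andP[/eqP -> /eqP ->].
apply/ker0/mul_mxcol_eq0 => k; rewrite obs_blockE -(output_sub u).
by apply/eqP; rewrite subr_eq0 same_out //; have := ltn_ord k; lia.
Qed.

End SecondOrderSystem.

Theorem theorem2p1 (R : realType) (n p r : nat)
  (hn : (1 <= n)%N) (hp : (1 <= p)%N) (hr : (1 <= r)%N)
  (A0 A1 : 'M[R]_n) (B : 'M[R]_(n, r)) (C : 'M[R]_(p, n)) :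
  observable A0 A1 B C <-> \rank (obs_mx A0 A1 C) = (2 * n)%N.
Proof. by rewrite observableP // -full_col_rankP; split => ->; lia. Qed.
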